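(* For $p\ge1$, $t\in\mathbb{R}$ and $\phi\in\mathbb{R}$ let \[ \Psi_{p,t}(\phi)=t\sin\big((1-1/p)\phi\big)+2(1-t)\sin\phi\,\cos(\phi/p) =(1-t)\sin\big((1+1/p)\phi\big)+\sin\big((1-1/p)\phi\big), \] and let \[ g(p)=\min\{t\in\mathbb{R}:\ \Psi_{p,t}(\phi)\ge0 \text{ for all } 0<\phi<\pi\}. \] Then the function $g$ is continuous on $[1,\infty)$, $g(1)=1$, $g(p)=0$ for all $p\ge2$, and $g$ is strictly decreasing on $[1,2]$. In particular $g(3/2)=1/5$. *)

From Stdlib Require Import Reals Lra ClassicalEpsilon.
Open Scope R_scope.

Definition Psi (p t phi : R) : R :=
  t * sin ((1 - 1 / p) * phi) + 2 * (1 - t) * sin phi * cos (phi / p).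

Definition admissible (p t : R) : Prop :=
  forall phi : R, 0 < phi < PI -> 0 <= Psi p t phi.

Definition is_min (S : R -> Prop) (t : R) : Prop :=
  S t /\ forall t', S t' -> t <= t'.

(* g(p) = min { t | admissible p t }, chosen by Hilbert's epsilon; the main
   theorem asserts this minimum exists for p >= 1, so g p is that minimum. *)
Definition g (p : R) : R :=
  epsilon (inhabits 0) (fun t => is_min (admissible p) t).

(* With s = 1/p, Psi_{p,t}(phi) = sin((1-s) phi) + (1-t) sin((1+s) phi) is affine in t, so the
   admissible t form a closed interval containing 1 and bounded below by 0 (letting phi -> PI),
   and g(p) is its least element.  For p >= 2, Psi_{p,0} = 2 sin phi cos(phi/p) >= 0, while for
   p < 2 the cosine changes sign, so g > 0 there.  Strict decrease: on the arc where
   sin((1+1/q) phi) < 0, a cross identity for sines transfers admissibility of g(p) from p to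
   q > p with strict inequality, and compactness of that arc leaves room to lower t.
   Continuity: Psi is Lipschitz in p uniformly in phi, which gives lower semicontinuity, and
   together with a positive margin of Psi_{p, g(p) + eps} on (PI/2, PI) also upper
   semicontinuity from the left; from the right g is bounded by monotonicity. *)

From Stdlib Require Import Reals Lra Psatz ClassicalEpsilon Classical.
Open Scope R_scope.

Lemma sin_lipschitz u v : Rabs (sin u - sin v) <= Rabs (u - v).
Proof.
  destruct (MVT_abs sin cos v u) as [c [Hc _]].
  { intros c _; apply derivable_pt_lim_sin. }
  rewrite Hc.
  assert (Rabs (cos c) <= 1) by (apply Rabs_le, COS_bound).
  pose proof (Rabs_pos (u - v)); nra.
Qed.

Lemma Rabs_inv_sub_le p x : 1 <= p -> 1 <= x -> Rabs (/ p - / x) <= Rabs (x - p).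
Proof.
  intros Hp Hx.
  replace (/ p - / x) with ((x - p) * / (p * x)) by (field; lra).
  assert (Hpx : 0 < / (p * x) <= 1).
  { split; [apply Rinv_0_lt_compat; nra|].
    rewrite <- Rinv_1; apply Rinv_le_contravar; nra. }
  rewrite Rabs_mult, (Rabs_right (/ (p * x))) by lra.
  pose proof (Rabs_pos (x - p)); nra.
Qed.

Lemma sin_3a x : sin (3 * x) = 3 * sin x - 4 * sin x ^ 3.
Proof.
  replace (3 * x) with (2 * x + x) by ring.
  rewrite sin_plus, sin_2a, cos_2a_sin.
  pose proof (sin2_cos2 x) as Hpyth; unfold Rsqr in Hpyth.
  replace (2 * sin x * cos x * cos x) with (2 * sin x * (cos x * cos x)) by ring.
  replace (cos x * cos x) with (1 - sin x * sin x) by lra.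
  ring.
Qed.

Lemma sin_cross A B C :
  sin (A - C) * sin (A + B) - sin (A - B) * sin (A + C) = sin (2 * A) * sin (B - C).
Proof. rewrite !sin_minus, !sin_plus, sin_2a. ring. Qed.

Lemma continuity_pt_nonneg_right_end f a b : a < b -> continuity_pt f b ->
  (forall x, a < x < b -> 0 <= f x) -> 0 <= f b.
Proof.
  intros Hab Hf Hpos.
  destruct (Rle_lt_dec 0 (f b)) as [|Hneg]; [assumption|].
  destruct (Hf (- f b)) as [alp [Halp Hnear]]; [lra|].
  set (x := b - Rmin alp (b - a) / 2).
  assert (Hmin : 0 < Rmin alp (b - a)) by (apply Rmin_glb_lt; lra).
  pose proof (Rmin_l alp (b - a)); pose proof (Rmin_r alp (b - a)).
  assert (Hx : a < x < b) by (unfold x; lra).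
  assert (Hfx : Rabs (f x - f b) < - f b).
  { apply (Hnear x); split; [split; [exact I | unfold x; lra]|].
    simpl; unfold R_dist; rewrite Rabs_left; unfold x; lra. }
  apply Rabs_def2 in Hfx; pose proof (Hpos x Hx); lra.
Qed.

Definition Psi_s (s t phi : R) : R :=
  sin ((1 - s) * phi) + (1 - t) * sin ((1 + s) * phi).

Lemma Psi_Psi_s p t phi : p <> 0 -> Psi p t phi = Psi_s (/ p) t phi.
Proof.
  intros Hp; unfold Psi, Psi_s.
  replace ((1 - 1 / p) * phi) with (phi - phi / p) by (field; auto).
  replace ((1 - / p) * phi) with (phi - phi / p) by (field; auto).
  replace ((1 + / p) * phi) with (phi + phi / p) by (field; auto).
  rewrite sin_minus, sin_plus; ring.
Qed.

Lemma Psi_s_continuity s t : continuity (Psi_s s t).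
Proof. unfold Psi_s; reg. Qed.

Lemma Psi_s_PI s t : Psi_s s t PI = t * sin (s * PI).
Proof.
  unfold Psi_s.
  replace ((1 - s) * PI) with (PI - s * PI) by ring.
  replace ((1 + s) * PI) with (s * PI + PI) by ring.
  rewrite sin_PI_x, neg_sin; ring.
Qed.

Lemma Psi_s_shift s t u phi :
  Psi_s s (t - u) phi = Psi_s s t phi + u * sin ((1 + s) * phi).
Proof. unfold Psi_s; ring. Qed.

Lemma Psi_s_lipschitz_t s t x phi :
  Rabs (Psi_s s x phi - Psi_s s t phi) <= Rabs (x - t).
Proof.
  replace (Psi_s s x phi - Psi_s s t phi) with ((t - x) * sin ((1 + s) * phi))
    by (unfold Psi_s; ring).
  rewrite Rabs_mult, Rabs_minus_sym.
  assert (Rabs (sin ((1 + s) * phi)) <= 1) by (apply Rabs_le, SIN_bound).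
  pose proof (Rabs_pos (x - t)); nra.
Qed.

Lemma Psi_s_lipschitz_s s r t phi : 0 <= phi ->
  Rabs (Psi_s r t phi - Psi_s s t phi) <= (1 + Rabs (1 - t)) * phi * Rabs (r - s).
Proof.
  intros Hphi.
  pose proof (sin_lipschitz ((1 - r) * phi) ((1 - s) * phi)) as Hminus.
  pose proof (sin_lipschitz ((1 + r) * phi) ((1 + s) * phi)) as Hplus.
  replace ((1 - r) * phi - (1 - s) * phi) with (- ((r - s) * phi)) in Hminus by ring.
  replace ((1 + r) * phi - (1 + s) * phi) with ((r - s) * phi) in Hplus by ring.
  rewrite Rabs_Ropp in Hminus.
  rewrite Rabs_mult, (Rabs_right phi) in Hminus, Hplus by lra.
  replace (Psi_s r t phi - Psi_s s t phi) with
    ((sin ((1 - r) * phi) - sin ((1 - s) * phi))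
     + (1 - t) * (sin ((1 + r) * phi) - sin ((1 + s) * phi))) by (unfold Psi_s; ring).
  eapply Rle_trans; [apply Rabs_triang|].
  rewrite Rabs_mult.
  pose proof (Rabs_pos (1 - t)).
  pose proof (Rabs_pos (sin ((1 + r) * phi) - sin ((1 + s) * phi))).
  nra.
Qed.

Lemma Psi_lipschitz_p p x t phi : 1 <= p -> 1 <= x -> 0 <= phi <= PI ->
  Rabs (Psi x t phi - Psi p t phi) <= (1 + Rabs (1 - t)) * PI * Rabs (x - p).
Proof.
  intros Hp Hx Hphi.
  rewrite !Psi_Psi_s by lra.
  eapply Rle_trans; [apply Psi_s_lipschitz_s; lra|].
  rewrite (Rabs_minus_sym (/ x)).
  pose proof (Rabs_inv_sub_le p x Hp Hx).
  pose proof (Rabs_pos (1 - t)); pose proof (Rabs_pos (/ p - / x)).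
  apply Rmult_le_compat; [nra | assumption | nra | assumption].
Qed.

Lemma Psi_s_nonneg_small s t phi : 0 <= s <= 1 -> t <= 1 -> 0 <= phi ->
  (1 + s) * phi <= PI -> 0 <= Psi_s s t phi.
Proof.
  intros Hs Ht Hphi Hsmall; unfold Psi_s.
  assert (0 <= sin ((1 - s) * phi)) by (apply sin_ge_0; nra).
  assert (0 <= sin ((1 + s) * phi)) by (apply sin_ge_0; nra).
  nra.
Qed.

Lemma inv_in_unit p : 1 <= p -> 0 < / p <= 1.
Proof.
  intros Hp; split; [apply Rinv_0_lt_compat; lra|].
  rewrite <- Rinv_1; apply Rinv_le_contravar; lra.
Qed.

Lemma admissible_Psi_s p t : 1 <= p -> admissible p t ->
  forall phi, 0 < phi < PI -> 0 <= Psi_s (/ p) t phi.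
Proof. intros Hp Ha phi Hphi; rewrite <- Psi_Psi_s by lra; auto. Qed.

Lemma admissible_1 p : 1 <= p -> admissible p 1.
Proof.
  intros Hp phi Hphi; rewrite Psi_Psi_s by lra; unfold Psi_s.
  pose proof (inv_in_unit p Hp).
  rewrite Rminus_diag, Rmult_0_l, Rplus_0_r.
  apply sin_ge_0; nra.
Qed.

Lemma admissible_convex p t1 t2 t : 1 <= p -> admissible p t1 -> admissible p t2 ->
  t1 <= t <= t2 -> admissible p t.
Proof.
  intros Hp H1 H2 Ht phi Hphi.
  specialize (H1 phi Hphi); specialize (H2 phi Hphi).
  rewrite Psi_Psi_s in * by lra; unfold Psi_s in *.
  destruct (Rle_lt_dec 0 (sin ((1 + / p) * phi))); nra.
Qed.

Lemma admissible_closed p t : 1 <= p ->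
  (forall eps, 0 < eps -> exists x, admissible p x /\ Rabs (x - t) < eps) ->
  admissible p t.
Proof.
  intros Hp Happrox phi Hphi.
  apply Rle_plus_epsilon; intros eps Heps.
  destruct (Happrox eps Heps) as [x [Hx Hxt]].
  pose proof (Hx phi Hphi) as Hpos.
  rewrite Psi_Psi_s in * by lra.
  pose proof (Psi_s_lipschitz_t (/ p) t x phi) as Hlip.
  pose proof (Rle_abs (Psi_s (/ p) x phi - Psi_s (/ p) t phi)); lra.
Qed.

Lemma has_min_of_closed (S : R -> Prop) lb :
  (exists x, S x) -> (forall x, S x -> lb <= x) ->
  (forall t, (forall eps, 0 < eps -> exists x, S x /\ Rabs (x - t) < eps) -> S t) ->
  exists t, is_min S t.
Proof.
  intros [x0 Hx0] Hlb Hclosed.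
  set (E := fun y => S (- y)).
  assert (HE : bound E) by (exists (- lb); intros y Hy; specialize (Hlb _ Hy); lra).
  assert (HE0 : exists y, E y) by (exists (- x0); unfold E; rewrite Ropp_involutive; auto).
  destruct (completeness E HE HE0) as [m [Hub Hleast]].
  assert (Hinf : forall x, S x -> - m <= x).
  { intros x Hx. assert (HEx : E (- x)) by (unfold E; rewrite Ropp_involutive; auto).
    specialize (Hub _ HEx); lra. }
  exists (- m); split; [|exact Hinf].
  apply Hclosed; intros eps Heps.
  apply NNPP; intros Hfar.
  assert (Hub' : is_upper_bound E (m - eps)).
  { intros y Hy. destruct (Rle_lt_dec y (m - eps)) as [|Hy']; [assumption|].
    exfalso; apply Hfar; exists (- y); split; [exact Hy|].
    assert (- y >= - m) by (apply Rle_ge, Hinf, Hy).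
    rewrite Rabs_right; lra. }
  specialize (Hleast _ Hub'); lra.
Qed.

Lemma admissible_at_1_ge_1 t : admissible 1 t -> 1 <= t.
Proof.
  intros Ha.
  assert (Hphi : 0 < 3 * (PI / 4) < PI) by (pose proof PI_RGT_0; lra).
  specialize (Ha _ Hphi); rewrite Psi_Psi_s, Rinv_1 in Ha by lra; unfold Psi_s in Ha.
  replace ((1 - 1) * (3 * (PI / 4))) with 0 in Ha by ring.
  replace ((1 + 1) * (3 * (PI / 4))) with (3 * (PI / 2)) in Ha by field.
  rewrite sin_0, sin_3PI2 in Ha; lra.
Qed.

Lemma admissible_nonneg p t : 1 <= p -> admissible p t -> 0 <= t.
Proof.
  intros Hp Ha.
  destruct (Req_dec p 1) as [->|Hp1]; [pose proof (admissible_at_1_ge_1 t Ha); lra|].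
  pose proof (inv_in_unit p Hp).
  assert (Hs : / p < 1) by (rewrite <- Rinv_1; apply Rinv_lt_contravar; lra).
  assert (Hsin : 0 < sin (/ p * PI)) by (pose proof PI_RGT_0; apply sin_gt_0; nra).
  assert (HPI : 0 <= Psi_s (/ p) t PI).
  { apply (continuity_pt_nonneg_right_end _ 0); [exact PI_RGT_0 | apply Psi_s_continuity|].
    intros phi Hphi; rewrite <- Psi_Psi_s by lra; auto. }
  rewrite Psi_s_PI in HPI; nra.
Qed.

Lemma admissible_has_min p : 1 <= p -> exists t, is_min (admissible p) t.
Proof.
  intros Hp; apply (has_min_of_closed _ 0).
  - exists 1; apply admissible_1, Hp.
  - intros x; exact (admissible_nonneg p x Hp).
  - intros t; exact (admissible_closed p t Hp).
Qed.

Lemma g_spec p : 1 <= p -> is_min (admissible p) (g p).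
Proof. intros Hp; unfold g; apply epsilon_spec, admissible_has_min, Hp. Qed.

Lemma g_admissible p : 1 <= p -> admissible p (g p).
Proof. intros Hp; apply (g_spec p Hp). Qed.

Lemma g_le p t : 1 <= p -> admissible p t -> g p <= t.
Proof. intros Hp; apply (g_spec p Hp). Qed.

Lemma g_unique p t : 1 <= p -> admissible p t -> (forall t', admissible p t' -> t <= t') ->
  g p = t.
Proof.
  intros Hp Ht Hmin; apply Rle_antisym; [apply g_le; auto|].
  apply Hmin, g_admissible, Hp.
Qed.

Lemma g_le_1 p : 1 <= p -> g p <= 1.
Proof. intros Hp; apply g_le, admissible_1; exact Hp. Qed.

Lemma g_ge_0 p : 1 <= p -> 0 <= g p.
Proof. intros Hp; apply (admissible_nonneg p), g_admissible; exact Hp. Qed.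

Lemma g_1 : g 1 = 1.
Proof.
  apply g_unique; [lra | apply admissible_1; lra | apply admissible_at_1_ge_1].
Qed.

Lemma admissible_0 p : 2 <= p -> admissible p 0.
Proof.
  intros Hp phi Hphi; unfold Psi.
  assert (0 < sin phi) by (apply sin_gt_0; lra).
  assert (Hphip : 0 < phi / p <= phi / 2).
  { split; [apply Rdiv_lt_0_compat; lra|].
    apply Rmult_le_compat_l; [lra|]; apply Rinv_le_contravar; lra. }
  assert (0 <= cos (phi / p)) by (apply cos_ge_0; lra).
  nra.
Qed.

(* At [phi] halfway between [p PI / 2] and [PI], [sin phi > 0] but [cos (phi / p) < 0]. *)
Lemma not_admissible_0 p : 1 <= p < 2 -> ~ admissible p 0.
Proof.
  intros Hp Ha. pose proof PI_RGT_0.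
  set (phi := (p * PI / 2 + PI) / 2).
  assert (Hphi : 0 < phi < PI) by (unfold phi; nra).
  specialize (Ha phi Hphi); unfold Psi in Ha.
  assert (0 < sin phi) by (apply sin_gt_0; lra).
  assert (Hphip : PI / 2 < phi / p < 3 * (PI / 2)).
  { split; apply (Rmult_lt_reg_r p); try lra;
      replace (phi / p * p) with phi by (field; lra); unfold phi; nra. }
  assert (cos (phi / p) < 0) by (apply cos_lt_0; lra).
  nra.
Qed.

Lemma g_eq_0 p : 2 <= p -> g p = 0.
Proof.
  intros Hp; apply g_unique; [lra | apply admissible_0, Hp|].
  intros t; apply admissible_nonneg; lra.
Qed.

Lemma g_gt_0 p : 1 <= p < 2 -> 0 < g p.
Proof.
  intros Hp; pose proof (g_ge_0 p (proj1 Hp)).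
  destruct (Req_dec (g p) 0) as [Hg0|]; [|lra].
  exfalso; apply (not_admissible_0 p Hp); rewrite <- Hg0; apply g_admissible; lra.
Qed.

Lemma Psi_3_2 t x : Psi (3 / 2) t (3 * x) =
  sin x * (t + 2 * (1 - t) * (3 - 4 * sin x ^ 2) * (1 - 2 * sin x ^ 2)).
Proof.
  unfold Psi.
  replace ((1 - 1 / (3 / 2)) * (3 * x)) with x by field.
  replace (3 * x / (3 / 2)) with (2 * x) by field.
  rewrite sin_3a, cos_2a_sin; ring.
Qed.

Lemma admissible_3_2_fifth : admissible (3 / 2) (1 / 5).
Proof.
  intros phi Hphi; replace phi with (3 * (phi / 3)) by field.
  rewrite Psi_3_2.
  assert (0 <= sin (phi / 3)) by (apply sin_ge_0; pose proof PI_RGT_0; lra).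
  set (c := sin (phi / 3)) in *.
  replace (1 / 5 + 2 * (1 - 1 / 5) * (3 - 4 * c ^ 2) * (1 - 2 * c ^ 2))
    with ((8 * c ^ 2 - 5) ^ 2 / 5) by field.
  apply Rmult_le_pos; [assumption|].
  apply Rmult_le_pos; [apply pow2_ge_0 | lra].
Qed.

(* [sin (phi / 3) ^ 2 = 5 / 8] is the double root of the factor vanishing for [t = 1/5]. *)
Lemma admissible_3_2_ge t : admissible (3 / 2) t -> 1 / 5 <= t.
Proof.
  intros Ha. pose proof PI_RGT_0.
  set (c := sqrt (5 / 8)).
  assert (Hc2 : c ^ 2 = 5 / 8) by (unfold c; rewrite pow2_sqrt; lra).
  assert (Hc0 : 0 < c) by (unfold c; apply sqrt_lt_R0; lra).
  set (x := asin c).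
  assert (Hsx : sin x = c) by (unfold x; apply sin_asin; nra).
  pose proof (asin_bound c) as Hb; fold x in Hb.
  assert (Hx0 : 0 < x).
  { destruct (Rle_lt_dec x 0) as [Hle|]; [exfalso|assumption].
    assert (sin x <= 0) by (rewrite <- (Ropp_involutive x), sin_neg;
      assert (0 <= sin (- x)) by (apply sin_ge_0; lra); lra).
    lra. }
  assert (Hx3 : x < PI / 3).
  { destruct (Rle_lt_dec (PI / 3) x) as [Hle|]; [exfalso|assumption].
    assert (Hsin : sin (PI / 3) <= sin x) by (apply sin_incr_1; lra).
    rewrite sin_PI3 in Hsin.
    assert (sqrt 3 ^ 2 = 3) by (rewrite pow2_sqrt; lra).
    pose proof (sqrt_pos 3); nra. }
  assert (Hphi : 0 < 3 * x < PI) by lra.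
  specialize (Ha _ Hphi); rewrite Psi_3_2, Hsx, Hc2 in Ha.
  nra.
Qed.

Lemma g_3_2 : g (3 / 2) = 1 / 5.
Proof.
  apply g_unique; [lra | exact admissible_3_2_fifth | exact admissible_3_2_ge].
Qed.

(* Writing [N s = sin ((1 - s) phi)] and [B s = sin ((1 + s) phi) < 0], [sin_cross] gives
   [N sq / - B sq > N sp / - B sp >= 1 - T] on [PI / (1 + sq) < phi < PI]. *)
Lemma Psi_s_tail_pos sp sq T phi : 0 < sq < sp -> sp <= 1 -> 0 < T <= 1 ->
  (forall phi, 0 < phi < PI -> 0 <= Psi_s sp T phi) ->
  PI / (1 + sq) <= phi <= PI -> 0 < Psi_s sq T phi.
Proof.
  intros Hs Hsp HT Hadm Hphi. pose proof PI_RGT_0.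
  assert (Hphi1 : (1 + sq) * (PI / (1 + sq)) = PI) by (field; lra).
  assert (PI / 2 <= PI / (1 + sq)) by (apply Rmult_le_compat_l; [lra|]; apply Rinv_le_contravar; lra).
  destruct (Req_dec phi PI) as [->|HnePI].
  { rewrite Psi_s_PI; apply Rmult_lt_0_compat; [lra|]; apply sin_gt_0; nra. }
  destruct (Req_dec phi (PI / (1 + sq))) as [->|Hne1].
  { unfold Psi_s; rewrite Hphi1, sin_PI.
    assert (0 < sin ((1 - sq) * (PI / (1 + sq)))) by (apply sin_gt_0; nra). lra. }
  assert (Hin : PI / (1 + sq) < phi < PI) by lra.
  specialize (Hadm phi ltac:(lra)); unfold Psi_s in *.
  assert (Hbq : sin ((1 + sq) * phi) < 0) by (apply sin_lt_0; nra).
  assert (Hbp : sin ((1 + sp) * phi) < 0) by (apply sin_lt_0; nra).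
  assert (Hsin2 : sin (2 * phi) < 0) by (apply sin_lt_0; nra).
  assert (Hd : sin ((sq - sp) * phi) < 0).
  { rewrite <- (Ropp_involutive ((sq - sp) * phi)), sin_neg.
    assert (0 < sin (- ((sq - sp) * phi))) by (apply sin_gt_0; nra). lra. }
  pose proof (sin_cross phi (sq * phi) (sp * phi)) as Hc.
  replace (phi - sp * phi) with ((1 - sp) * phi) in Hc by ring.
  replace (phi + sq * phi) with ((1 + sq) * phi) in Hc by ring.
  replace (phi - sq * phi) with ((1 - sq) * phi) in Hc by ring.
  replace (phi + sp * phi) with ((1 + sp) * phi) in Hc by ring.
  replace (sq * phi - sp * phi) with ((sq - sp) * phi) in Hc by ring.
  set (Nq := sin ((1 - sq) * phi)) in *; set (Np := sin ((1 - sp) * phi)) in *.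
  set (Bq := sin ((1 + sq) * phi)) in *; set (Bp := sin ((1 + sp) * phi)) in *.
  assert (Hcross : Nq * Bp < Np * Bq) by nra.
  assert (0 <= - Bq * (Np + (1 - T) * Bp)) by nra.
  assert (0 < - Bp * (Nq + (1 - T) * Bq)) by nra.
  nra.
Qed.

Lemma admissible_below_of_tail_pos q T : 1 <= q -> T <= 1 ->
  (forall phi, PI / (1 + / q) <= phi <= PI -> 0 < Psi_s (/ q) T phi) ->
  exists t, t < T /\ admissible q t.
Proof.
  intros Hq HT Htail. pose proof PI_RGT_0. pose proof (inv_in_unit q Hq).
  set (phi1 := PI / (1 + / q)).
  assert (Hphi1 : (1 + / q) * phi1 = PI) by (unfold phi1; field; lra).
  assert (phi1 <= PI) by (unfold phi1; apply Rmult_le_reg_r with (1 + / q); [lra|];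
    unfold Rdiv; rewrite Rmult_assoc, Rinv_l; nra).
  destruct (continuity_ab_min (Psi_s (/ q) T) phi1 PI) as [mx [Hmin Hmx]];
    [assumption | intros; apply Psi_s_continuity|].
  set (m := Psi_s (/ q) T mx).
  assert (Hm : 0 < m) by (apply Htail, Hmx).
  exists (T - m / 2); split; [lra|].
  intros phi Hphi; rewrite Psi_Psi_s, Psi_s_shift by lra.
  destruct (Rle_lt_dec phi phi1) as [Hsmall|Hlarge].
  - assert (0 <= sin ((1 + / q) * phi)) by (apply sin_ge_0; nra).
    assert (0 <= Psi_s (/ q) T phi) by (apply Psi_s_nonneg_small; nra).
    nra.
  - pose proof (Hmin phi (conj (Rlt_le _ _ Hlarge) (Rlt_le _ _ (proj2 Hphi)))) as Hge_m.
    fold m in Hge_m; pose proof (SIN_bound ((1 + / q) * phi)); nra.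
Qed.

Lemma g_decreasing p q : 1 <= p -> p < q -> q <= 2 -> g q < g p.
Proof.
  intros Hp Hpq Hq.
  pose proof (inv_in_unit p Hp).
  assert (Hqp : / q < / p) by (apply Rinv_lt_contravar; nra).
  assert (Hq0 : 0 < / q) by (apply Rinv_0_lt_compat; lra).
  assert (Htail : forall phi, PI / (1 + / q) <= phi <= PI -> 0 < Psi_s (/ q) (g p) phi).
  { intros phi Hphi; apply (Psi_s_tail_pos (/ p)); try lra.
    - split; [apply g_gt_0 | apply g_le_1]; lra.
    - apply admissible_Psi_s, g_admissible; exact Hp. }
  destruct (admissible_below_of_tail_pos q (g p)) as [t [Ht Hadm]];
    [lra | apply g_le_1, Hp | exact Htail|].
  pose proof (g_le q t ltac:(lra) Hadm); lra.
Qed.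

Lemma g_nonincreasing p x : 1 <= p -> p <= x -> g x <= g p.
Proof.
  intros Hp Hx.
  destruct (Req_dec p x) as [->|Hne]; [lra|].
  destruct (Rle_lt_dec x 2).
  - pose proof (g_decreasing p x Hp); lra.
  - rewrite (g_eq_0 x) by lra; apply g_ge_0, Hp.
Qed.

Lemma g_lower_semicontinuous p eps : 1 <= p -> 0 < eps -> exists d, 0 < d /\
  forall x, 1 <= x -> Rabs (x - p) < d -> g p - eps < g x.
Proof.
  intros Hp Heps. set (t := g p - eps).
  assert (Hna : ~ admissible p t) by (intros Ha; pose proof (g_le p t Hp Ha); unfold t in *; lra).
  apply not_all_ex_not in Hna as [phi Hphi].
  apply imply_to_and in Hphi as [Hphi Hneg]; apply Rnot_le_lt in Hneg.
  set (K := (1 + Rabs (1 - t)) * PI).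
  assert (HK : 0 < K) by (unfold K; pose proof (Rabs_pos (1 - t)); pose proof PI_RGT_0; nra).
  exists (- Psi p t phi / K); split; [apply Rdiv_lt_0_compat; lra|].
  intros x Hx Hd.
  destruct (Rle_lt_dec (g x) t) as [Hle|]; [exfalso|assumption].
  assert (Hadm : admissible x t).
  { apply (admissible_convex x (g x) 1); [exact Hx | apply g_admissible, Hx | apply admissible_1, Hx|].
    pose proof (g_le_1 p Hp); unfold t in *; lra. }
  pose proof (Hadm phi Hphi).
  pose proof (Psi_lipschitz_p p x t phi Hp Hx ltac:(lra)) as Hlip; fold K in Hlip.
  assert (K * Rabs (x - p) < - Psi p t phi).
  { apply (Rmult_lt_compat_l K) in Hd; [|assumption].
    replace (K * (- Psi p t phi / K)) with (- Psi p t phi) in Hd by (field; lra); lra. }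
  pose proof (Rle_abs (Psi x t phi - Psi p t phi)); lra.
Qed.

Lemma Psi_s_margin s T e : / 2 <= s < 1 -> 0 <= T -> 0 < e -> T + e <= 1 ->
  (forall phi, 0 < phi < PI -> 0 <= Psi_s s T phi) ->
  exists m, 0 < m /\ forall phi, PI / 2 < phi < PI -> m <= Psi_s s (T + e) phi.
Proof.
  intros Hs HT0 He HT Hadm. pose proof PI_RGT_0.
  set (c := sin ((1 - s) * (PI / 2))).
  assert (Hc : 0 < c) by (apply sin_gt_0; nra).
  exists (c / 2 * Rmin 1 e); split.
  { apply Rmult_lt_0_compat; [lra | apply Rmin_glb_lt; lra]. }
  intros phi Hphi.
  assert (HN : c <= sin ((1 - s) * phi)) by (apply sin_incr_1; nra).
  pose proof (Rmin_l 1 e); pose proof (Rmin_r 1 e).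
  pose proof (Hadm phi ltac:(lra)) as Hpos.
  replace (T + e) with (T - - e) by ring; rewrite Psi_s_shift.
  unfold Psi_s in *.
  set (B := sin ((1 + s) * phi)) in *; set (N := sin ((1 - s) * phi)) in *.
  destruct (Rle_lt_dec B (- (c / 2))) as [HB|HB].
  - assert (0 <= e * (- B - c / 2)) by nra. nra.
  - assert (- (c / 2) * (1 - T - e) <= (1 - T - e) * B) by nra. nra.
Qed.

Lemma admissible_of_margin p x t m : 1 <= p -> 1 <= x -> 0 <= t <= 1 ->
  (forall phi, PI / 2 < phi < PI -> m <= Psi p t phi) ->
  Rabs (x - p) * (2 * PI) < m -> admissible x t.
Proof.
  intros Hp Hx Ht Hmargin Hclose phi Hphi. pose proof (inv_in_unit x Hx).
  destruct (Rle_lt_dec ((1 + / x) * phi) PI) as [Hsmall|Hlarge].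
  { rewrite Psi_Psi_s by lra; apply Psi_s_nonneg_small; lra. }
  assert (Hphi2 : PI / 2 < phi) by nra.
  pose proof (Hmargin phi (conj Hphi2 (proj2 Hphi))).
  pose proof (Psi_lipschitz_p p x t phi Hp Hx ltac:(lra)) as Hlip.
  rewrite (Rabs_right (1 - t)) in Hlip by lra.
  assert ((1 + (1 - t)) * PI * Rabs (x - p) <= Rabs (x - p) * (2 * PI))
    by (assert (0 <= t * (PI * Rabs (x - p)))
          by (apply Rmult_le_pos; [lra | apply Rmult_le_pos; [pose proof PI_RGT_0; lra | apply Rabs_pos]]);
        lra).
  pose proof (Rle_abs (Psi p t phi - Psi x t phi)) as Habs.
  rewrite Rabs_minus_sym in Habs; lra.
Qed.

Lemma g_upper_semicontinuous p eps : 1 <= p -> 0 < eps -> exists d, 0 < d /\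
  forall x, 1 <= x -> Rabs (x - p) < d -> g x < g p + eps.
Proof.
  intros Hp Heps.
  destruct (Rlt_le_dec 2 p) as [Hp2|Hp2].
  { exists (p - 2); split; [lra|]; intros x Hx Hd.
    pose proof (Rle_abs (p - x)); rewrite Rabs_minus_sym in Hd.
    rewrite !g_eq_0 by lra; lra. }
  set (t := g p + eps / 2).
  destruct (Rle_lt_dec 1 t) as [Hbig|Hsmall].
  { exists 1; split; [lra|]; intros x Hx _; pose proof (g_le_1 x Hx); unfold t in *; lra. }
  assert (Hp1 : p <> 1) by (intros ->; unfold t in Hsmall; rewrite g_1 in Hsmall; lra).
  assert (Hs : / 2 <= / p < 1).
  { split; [apply Rinv_le_contravar; lra | rewrite <- Rinv_1; apply Rinv_lt_contravar; lra]. }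
  pose proof (g_ge_0 p Hp) as Hg0.
  pose proof (admissible_Psi_s p (g p) Hp (g_admissible p Hp)) as Hadm_p.
  destruct (Psi_s_margin (/ p) (g p) (eps / 2) Hs Hg0 ltac:(lra) ltac:(unfold t in *; lra) Hadm_p)
    as [m [Hm Hmargin]].
  fold t in Hmargin. pose proof PI_RGT_0.
  exists (m / (2 * PI)); split; [apply Rdiv_lt_0_compat; lra|].
  intros x Hx Hd.
  destruct (Rle_lt_dec p x) as [Hpx|Hxp].
  { pose proof (g_nonincreasing p x Hp Hpx); lra. }
  assert (Hadm : admissible x t).
  { apply (admissible_of_margin p x t m Hp Hx); [unfold t in *; lra| |].
    - intros phi Hphi; rewrite Psi_Psi_s by lra; apply Hmargin, Hphi.
    - apply (Rmult_lt_compat_r (2 * PI)) in Hd; [|lra].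
      replace (m / (2 * PI) * (2 * PI)) with m in Hd by (field; lra); lra. }
  pose proof (g_le x t Hx Hadm); unfold t in *; lra.
Qed.

Lemma g_continuous_at p : 1 <= p -> limit1_in g (fun q => 1 <= q) (g p) p.
Proof.
  intros Hp eps Heps.
  destruct (g_lower_semicontinuous p eps Hp Heps) as [d1 [Hd1 Hlow]].
  destruct (g_upper_semicontinuous p eps Hp Heps) as [d2 [Hd2 Hup]].
  exists (Rmin d1 d2); split; [apply Rmin_glb_lt; assumption|].
  intros x [Hx Hdx]; simpl in *; unfold R_dist in *.
  pose proof (Rmin_l d1 d2); pose proof (Rmin_r d1 d2).
  specialize (Hlow x Hx ltac:(lra)); specialize (Hup x Hx ltac:(lra)).
  apply Rabs_def1; lra.
Qed.

Theorem mainTheorem2 :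
  (forall p : R, 1 <= p -> is_min (admissible p) (g p)) /\
  (forall p : R, 1 <= p -> limit1_in g (fun q => 1 <= q) (g p) p) /\
  g 1 = 1 /\
  (forall p : R, 2 <= p -> g p = 0) /\
  (forall p q : R, 1 <= p -> p < q -> q <= 2 -> g q < g p) /\
  g (3 / 2) = 1 / 5.
Proof.
  repeat split.
  - apply g_admissible; assumption.
  - intros t; apply g_le; assumption.
  - exact g_continuous_at.
  - exact g_1.
  - exact g_eq_0.
  - exact g_decreasing.
  - exact g_3_2.
Qed.
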